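(* Let $n\ge1$ and let $\mathcal{C}^n\subset M_{\mathbb{R}}/2\pi M$ be the coamoeba of the pair of pants $\mathcal{P}^n$. Then $\mathcal{C}^n$ is the complement of the image, under the quotient map $M_{\mathbb{R}}\to M_{\mathbb{R}}/2\pi M$, of the interior of $\pi Z_n$.
   Context: Let $\widetilde{M}=\mathbb{Z}\langle e_1,\dots,e_{n+2}\rangle$, $e_{[n+2]}=e_1+\dots+e_{n+2}$, $M=\widetilde{M}/\langle e_{[n+2]}\rangle$, $M_{\mathbb{R}}=M\otimes\mathbb{R}$. Identify $M_{\mathbb{C}^*}=M\otimes\mathbb{C}^*$ with $\mathbb{CP}^{n+1}\setminus\bigcup_j\{z_j=0\}$, and let $\mathrm{Arg}\colon M_{\mathbb{C}^*}\to M_{\mathbb{R}}/2\pi M$ be induced by $(z_1,\dots,z_{n+2})\mapsto(\arg z_1,\dots,\arg z_{n+2})$. The pair of pants is $\mathcal{P}^n=\{\sum_j z_j=0\}\subset M_{\mathbb{C}^*}$, and its coamoeba $\mathcal{C}^n$ is the closure of $\mathrm{Arg}(\mathcal{P}^n)$. The zonotope is $Z_n=\{\sum_j\theta_je_j:\theta_j\in[0,1]\}\subset M_{\mathbb{R}}$; interior is taken in $M_{\mathbb{R}}$. *)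

From HB Require Import structures.
From mathcomp Require Import all_boot all_order all_algebra.
From mathcomp Require Import all_classical all_reals all_analysis.
Set Implicit Arguments. Unset Strict Implicit. Unset Printing Implicit Defensive.
Import Order.TTheory GRing.Theory Num.Theory.
Local Open Scope ring_scope.

(* Points of R^{n+2} = M~ (x) R, coordinates indexed by 'I_(n+2). *)
Definition vec (R : realType) (n : nat) := 'I_n.+2 -> R.

(* Equivalence whose quotient is M_R = R^{n+2} / R(1,...,1). *)
Definition mr_equiv (R : realType) (n : nat) (a b : vec R n) : Prop :=
  exists c : R, forall j, b j = a j + c.

(* Equivalence whose quotient is the torus M_R / 2 pi M,
   i.e. R^{n+2} / (R(1,...,1) + 2 pi Z^{n+2}). *)
Definition torus_equiv (R : realType) (n : nat) (a b : vec R n) : Prop :=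
  exists (c : R) (k : 'I_n.+2 -> int),
    forall j, b j = a j + c + 2 * pi * (k j)%:~R.

Definition open_vec (R : realType) (n : nat) (U : vec R n -> Prop) : Prop :=
  forall a, U a -> exists2 e : R, 0 < e &
    forall b, (forall j, `|b j - a j| < e) -> U b.

Definition saturated (R : realType) (n : nat)
  (E : vec R n -> vec R n -> Prop) (U : vec R n -> Prop) : Prop :=
  forall a b, E a b -> U a -> U b.

(* Subsets of a quotient R^{n+2}/E are represented by their (saturated)
   preimages in R^{n+2}; open sets of the quotient topology are the
   saturated open sets.  [qclosure E S] is the preimage of the closure
   (in the quotient topology) of the image of S. *)
Definition qclosure (R : realType) (n : nat)
  (E : vec R n -> vec R n -> Prop) (S : vec R n -> Prop) (a : vec R n) : Prop :=
  forall U, open_vec U -> saturated E U -> U a ->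
    exists b c, U b /\ S c /\ E c b.

(* [qinterior E S] is the preimage of the interior (in the quotient
   topology) of the image of the E-saturated set S. *)
Definition qinterior (R : realType) (n : nat)
  (E : vec R n -> vec R n -> Prop) (S : vec R n -> Prop) (a : vec R n) : Prop :=
  exists U, [/\ open_vec U, saturated E U, U a & forall b, U b -> S b].

(* phi is an argument vector of z = (x_j + i y_j)_j : z_j <> 0 and
   z_j = |z_j| (cos phi_j + i sin phi_j). *)
Definition is_arg_vec (R : realType) (n : nat) (x y phi : vec R n) : Prop :=
  forall j, (x j != 0 \/ y j != 0) /\
    x j = Num.sqrt (x j ^+ 2 + y j ^+ 2) * cos (phi j) /\
    y j = Num.sqrt (x j ^+ 2 + y j ^+ 2) * sin (phi j).

(* Preimage in R^{n+2} of Arg(P^n) : the points of M_R/2piM of the form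
   Arg(z), z = [z_1 : ... : z_{n+2}] in (C^* )^{n+2}/C^* with sum z_j = 0. *)
Definition argP (R : realType) (n : nat) (a : vec R n) : Prop :=
  exists x y phi : vec R n,
    [/\ \sum_j x j = 0, \sum_j y j = 0, is_arg_vec x y phi &
        torus_equiv phi a].

(* Preimage in R^{n+2} of the coamoeba C^n = closure of Arg(P^n)
   in M_R / 2 pi M. *)
Definition coamoeba (R : realType) (n : nat) : vec R n -> Prop :=
  qclosure (@torus_equiv R n) (@argP R n).

(* Preimage in R^{n+2} of pi Z_n = { sum_j pi t_j e_j : t_j in [0,1] } in M_R. *)
Definition piZonotope (R : realType) (n : nat) (a : vec R n) : Prop :=
  exists t : vec R n, (forall j, 0 <= t j <= 1) /\
    mr_equiv (fun j => pi * t j) a.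

(* Preimage in R^{n+2} of the image in M_R/2piM of the interior
   (taken in M_R) of pi Z_n. *)
Definition zonotope_image (R : realType) (n : nat) (a : vec R n) : Prop :=
  exists b, qinterior (@mr_equiv R n) (@piZonotope R n) b /\
    torus_equiv b a.

From HB Require Import structures.
From mathcomp Require Import all_boot all_order all_algebra.
From mathcomp Require Import all_classical all_reals all_analysis.
From mathcomp Require Import ring lra.

(* Write u_j = e^(i a_j).  The point a lies in Arg(P^n) iff some positive
   combination of the u_j vanishes, and it lies in the image of the interior
   of pi Z_n iff all the u_j lie in one open half-plane through 0, i.e.
   sin (a_j + d) > 0 for all j and some d.  The two conditions exclude each
   other and the second one is open, so the coamoeba misses the image of the
   zonotope.  Conversely, if the u_j lie in no open half-plane then, by a
   planar argument, either three of them enclose the origin, which already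
   gives a vanishing positive combination, or two of them are antipodal, and
   rotating two vectors by a small angle produces an enclosing triple.  So
   every neighbourhood of such an a meets Arg(P^n). *)

Set Implicit Arguments.
Unset Strict Implicit.
Unset Printing Implicit Defensive.

Import Order.TTheory GRing.Theory Num.Theory.
Import numFieldNormedType.Exports.
Local Open Scope ring_scope.

Lemma periodicz (U V : zmodType) (f : U -> V) (T : U) :
  periodic f T -> forall (k : int) a, f (a + T *~ k) = f a.
Proof.
move=> fT [m|m] a; first exact: periodicn.
by rewrite -[in RHS](subrK (T *+ m.+1) a) periodicn // NegzE mulrNz.
Qed.

Section Trigonometry.
Variable R : realType.
Implicit Types (x y t : R).

Lemma sinD2piz x (k : int) : sin (x + 2 * pi * k%:~R) = sin x.
Proof. by rewrite mulrzr mulr_natl periodicz //; exact: sinD2pi. Qed.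

Lemma cosD2piz x (k : int) : cos (x + 2 * pi * k%:~R) = cos x.
Proof. by rewrite mulrzr mulr_natl periodicz //; exact: cosD2pi. Qed.

Lemma sin_gt0_shift_pi t : 0 < sin t ->
  exists k : int, 0 < t + 2 * pi * k%:~R < pi.
Proof.
move=> sint; have pi_gt0 := pi_gt0 R.
set q := t / (2 * pi); pose f : R := (Num.floor q)%:~R.
have /andP[fq qf] : f <= q < f + 1 by have := floor_itv q; rewrite intrD.
have tq : t = q * (2 * pi) by rewrite /q mulfVK //; lra.
exists (- Num.floor q); rewrite mulrNz -/f.
set u := t + 2 * pi * - f.
have u_ge0 : 0 <= u by rewrite /u tq; nra.
have u_lt2pi : u < 2 * pi by rewrite /u tq; nra.
have sinu : 0 < sin u by rewrite /u /f -mulrNz sinD2piz.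
apply/andP; split.
  by rewrite lt_def u_ge0 andbT; apply: contraTneq sinu => ->; rewrite sin0 ltxx.
rewrite ltNge; apply/negP => pi_le_u.
have : 0 <= sin (u - pi) by apply: sin_ge0_pi; apply/andP; split; lra.
by rewrite -[u in sin u](subrK pi) sinDpi in sinu; lra.
Qed.

Lemma unit_circle_angle x y : x ^+ 2 + y ^+ 2 = 1 ->
  exists t, sin t = x /\ cos t = y.
Proof.
move=> xy1; have y_itv : -1 <= y <= 1 by apply/andP; split; nra.
have cosy : cos (acos y) = y by rewrite acosK // in_itv.
have siny : sin (acos y) = `|x|.
  by rewrite sin_acos // -sqrtr_sqr; congr Num.sqrt; lra.
case: (lerP 0 x) => x0.
- by exists (acos y); rewrite cosy siny ger0_norm.
- by exists (- acos y); rewrite sinN cosN cosy siny ltr0_norm // opprK.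
Qed.

Lemma lin_cos_sin_rotation x y : 0 < x ^+ 2 + y ^+ 2 ->
  exists2 rho, 0 < rho &
    exists t, forall u, x * cos u + y * sin u = rho * sin (u + t).
Proof.
move=> pos; set rho := Num.sqrt (x ^+ 2 + y ^+ 2).
have rho_gt0 : 0 < rho by rewrite sqrtr_gt0.
have [|t [st ct]] := @unit_circle_angle (x / rho) (y / rho).
  by rewrite !expr_div_n sqr_sqrtr ?ltW // -mulrDl mulfV // gt_eqF.
exists rho => //; exists t => u.
by rewrite sinD st ct; field; rewrite gt_eqF.
Qed.

Lemma sin_eq0_cos_eqN1 x : cos x = -1 -> sin x = 0.
Proof.
move=> cx; have := cos2Dsin2 x; rewrite cx sqrrN expr1n => h.
by apply/eqP; rewrite -sqrf_eq0; apply/eqP; lra.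
Qed.

Lemma sin_gt0_right x : 0 <= sin x -> cos x != -1 ->
  exists2 r, 0 < r & forall t, 0 < t < r -> 0 < sin (x + t).
Proof.
move=> sx_ge0 cx.
have [sx0|sx_neq0] := eqVneq (sin x) 0.
  have cx1 : cos x = 1.
    have := cos2Dsin2 x; rewrite sx0 expr0n addr0 => /eqP.
    by rewrite sqrf_eq1 => /orP[/eqP // | /eqP cxN]; rewrite cxN eqxx in cx.
  exists pi => [|t t_itv]; first exact: pi_gt0.
  by rewrite sinD sx0 cx1 mul0r add0r mul1r; exact: sin_gt0_pi.
have sx_gt0 : 0 < sin x by rewrite lt_def sx_neq0.
have [r r_gt0 ball_r] :=
  iffLR (nbhs_ballP _ _) (cvgr_gt _ (@continuous_sin R x) _ sx_gt0).
exists r => // t /andP[t_gt0 t_lt_r]; apply: ball_r.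
by rewrite /ball /= opprD addNKr normrN gtr0_norm.
Qed.

End Trigonometry.

Lemma sqr_add_gt0 (R : realDomainType) (x y : R) :
  x != 0 \/ y != 0 -> 0 < x ^+ 2 + y ^+ 2.
Proof.
have := sqr_ge0 x; have := sqr_ge0 y => y2 x2.
case=> nz.
- have : 0 < x ^+ 2 by rewrite lt_def sqrf_eq0 nz sqr_ge0.
  lra.
- have : 0 < y ^+ 2 by rewrite lt_def sqrf_eq0 nz sqr_ge0.
  lra.
Qed.

Lemma sum_indicator (R : pzRingType) (I : finType) (j : I) (f : I -> R) :
  \sum_m (m == j)%:R * f m = f j.
Proof.
rewrite (bigD1 j) //= eqxx mul1r big1 ?addr0 // => i /negbTE ->.
by rewrite mul0r.
Qed.

Section PositiveSpan.
Variables (R : realFieldType) (I : Type) (x y : I -> R).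
Local Notation det j k := (x j * y k - y j * x k).

(* With [u_m = (x m, y m)]: Cramer's rule for [u_j, u_k], plus a large
   multiple of the relation [det k l * u_j + det l j * u_k + det j k * u_l = 0]. *)
Lemma positive_span3 j k l : 0 < det j k -> 0 < det k l -> 0 < det l j ->
  forall v w : R, exists p q r : R, [/\ 0 < p, 0 < q, 0 < r,
    p * x j + q * x k + r * x l = v & p * y j + q * y k + r * y l = w].
Proof.
move=> djk dkl dlj v w.
set al := (v * y k - w * x k) / det j k; set be := (w * x j - v * y j) / det j k.
set T := (`|al| + 1) / det k l + (`|be| + 1) / det l j.
have al1 : 0 < (`|al| + 1) / det k l by apply: divr_gt0; have := normr_ge0 al; lra.
have be1 : 0 < (`|be| + 1) / det l j by apply: divr_gt0; have := normr_ge0 be; lra.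
have T_gt0 : 0 < T by rewrite /T; lra.
have Tkl : `|al| + 1 <= T * det k l.
  rewrite /T mulrDl divfK ?gt_eqF //; have := mulr_gt0 be1 dkl; lra.
have Tlj : `|be| + 1 <= T * det l j.
  rewrite /T mulrDl [_ / det l j * _]divfK ?gt_eqF //.
  by have := mulr_gt0 al1 dlj; lra.
exists (al + T * det k l), (be + T * det l j), (T * det j k); split.
- by have := lerNnormlW (lexx `|al|); lra.
- by have := lerNnormlW (lexx `|be|); lra.
- exact: mulr_gt0.
- by rewrite /al /be; field; rewrite gt_eqF.
- by rewrite /al /be; field; rewrite gt_eqF.
Qed.

End PositiveSpan.

Section AngleFamilies.
Variables (R : realType) (I : finType).
Implicit Types (a : I -> R) (j k l : I).

Definition open_halfcircle a := exists d, forall j, 0 < sin (a j + d).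

Definition balanced a := exists2 r : I -> R, (forall j, 0 < r j) &
  \sum_j r j * cos (a j) = 0 /\ \sum_j r j * sin (a j) = 0.

Definition encloses_origin a j k l :=
  [/\ 0 < sin (a k - a j), 0 < sin (a l - a k) & 0 < sin (a j - a l)].

Definition antipodal a j k := sin (a k - a j) = 0 /\ cos (a k - a j) = -1.

Lemma balanced_not_open_halfcircle a (i0 : I) :
  balanced a -> ~ open_halfcircle a.
Proof.
move=> [r r_gt0 [Sc Ss]] [d sin_gt0].
have : \sum_j r j * sin (a j + d) = 0.
  have e j : r j * sin (a j + d)
      = cos d * (r j * sin (a j)) + sin d * (r j * cos (a j)).
    by rewrite sinD; ring.
  under eq_bigr do rewrite e.
  by rewrite big_split /= -!mulr_sumr Ss Sc !mulr0 addr0.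
apply/eqP; rewrite gt_eqF // (bigD1 i0) //=.
apply: (lt_le_trans (mulr_gt0 (r_gt0 i0) (sin_gt0 i0))); rewrite lerDl.
by apply: sumr_ge0 => j _; apply: ltW; apply: mulr_gt0.
Qed.

Lemma balanced_opp a : balanced a -> balanced (fun j => - a j).
Proof.
move=> [r r_gt0 [Sc Ss]]; exists r => //; split.
  by under eq_bigr do rewrite cosN.
by under eq_bigr do rewrite sinN mulrN; rewrite sumrN Ss oppr0.
Qed.

Lemma encloses_origin_balanced a j k l :
  encloses_origin a j k l -> balanced a.
Proof.
pose x m := cos (a m); pose y m := sin (a m).
have detE m m' : sin (a m' - a m) = x m * y m' - y m * x m'.
  by rewrite sinB /x /y; ring.
rewrite /encloses_origin !detE => -[djk dkl dlj].
have [p [q [r [p_gt0 q_gt0 r_gt0 Sx Sy]]]] :=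
  positive_span3 djk dkl dlj (- \sum_m x m) (- \sum_m y m).
pose w m := 1 + (m == j)%:R * p + (m == k)%:R * q + (m == l)%:R * r.
have sum_w f : \sum_m w m * f m = \sum_m f m + (p * f j + q * f k + r * f l).
  have e m : w m * f m = f m + (m == j)%:R * (p * f m) + (m == k)%:R * (q * f m)
      + (m == l)%:R * (r * f m) by rewrite /w; ring.
  by under eq_bigr do rewrite e; rewrite !big_split /= !sum_indicator !addrA.
exists w.
  move=> m; rewrite /w; have := ler0n R (m == j); have := ler0n R (m == k).
  have := ler0n R (m == l); nra.
by rewrite !sum_w Sx Sy !subrr.
Qed.

End AngleFamilies.

Lemma exists_upper_extremal (R : realFieldType) (I : finType) (c s : I -> R) :
  (exists k, 0 < s k) ->
  exists2 K, 0 < s K & forall m, 0 < s m -> 0 <= c m * s K - s m * c K.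
Proof.
move=> [k0 sk0].
have [K sK min_K] := @arg_minP _ _ _ k0 (fun k => 0 < s k) (fun k => c k / s k) sk0.
exists K => // m sm; have := min_K m sm.
by rewrite ler_pdivrMr // mulrAC ler_pdivlMr // subr_ge0 mulrC.
Qed.

Section OpenHalfplane.
Variables (R : realType) (I : finType) (c s : I -> R).
Local Notation det j k := (c j * s k - s j * c k).
Hypothesis unit_cs : forall m, c m ^+ 2 + s m ^+ 2 = 1.
Hypothesis no_antipodal : forall j k, ~ (c k = - c j /\ s k = - s j).
Hypothesis no_enclosing : forall j k l,
  ~ [/\ 0 < det j k, 0 < det k l & 0 < det l j].
Variable i0 : I.
Hypotheses (c_i0 : c i0 = 1) (s_i0 : s i0 = 0).

Lemma c_eq1 m : s m = 0 -> c m = 1.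
Proof.
move=> sm; have := unit_cs m; rewrite sm expr0n addr0 => /eqP.
rewrite sqrf_eq1 => /orP[/eqP // | /eqP cm]; exfalso.
by apply: (@no_antipodal i0 m); rewrite c_i0 s_i0 cm sm oppr0.
Qed.

Lemma det_lt0 k l : 0 <= s k -> s l <= 0 -> s l < s k -> det k l < 0.
Proof.
move=> sk_ge0 sl_le0 slk.
have [sk0|sk_neq0] := eqVneq (s k) 0; first by rewrite sk0 (c_eq1 sk0); lra.
have [sl0|sl_neq0] := eqVneq (s l) 0; first by rewrite sl0 (c_eq1 sl0); lra.
have sk_gt0 : 0 < s k by rewrite lt_def sk_neq0.
have sl_lt0 : s l < 0 by rewrite lt_neqAle sl_neq0.
have : det k l <= 0.
  rewrite leNgt; apply/negP => dkl; apply: (@no_enclosing i0 k l).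
  by rewrite c_i0 s_i0; split=> //; lra.
rewrite le_eqVlt => /orP[/eqP dkl | //]; exfalso.
(* [(c l, s l)] is a negative multiple of [(c k, s k)], hence its opposite. *)
set lam := s l / s k.
have slE : s l = lam * s k by rewrite /lam divfK.
have clE : c l = lam * c k.
  by apply: (mulIf sk_neq0); rewrite /lam mulrAC divfK //; lra.
have lam_lt0 : lam < 0 by rewrite /lam pmulr_llt0 ?invr_gt0.
have : lam ^+ 2 = 1.
  by rewrite -(unit_cs l) clE slE -[LHS]mulr1 -(unit_cs k); ring.
move=> /eqP; rewrite sqrf_eq1 => /orP[/eqP lam1 | /eqP lamN1]; first lra.
by apply: (@no_antipodal k l); rewrite clE slE lamN1 !mulN1r.
Qed.

Lemma upper_pivot : exists K, [/\ 0 <= s K, (exists m, 0 < s m) -> 0 < s K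
  & forall m, 0 < s m -> 0 <= det m K].
Proof.
case: (pselect (exists m, 0 < s m)) =>
  [/(@exists_upper_extremal _ _ c)[K sK ext] | none].
  by exists K; split=> //; exact: ltW.
exists i0; rewrite s_i0; split=> // m sm; exfalso; apply: none; by exists m.
Qed.

Lemma lower_pivot : exists L, [/\ s L <= 0, (exists m, s m < 0) -> s L < 0
  & forall m, s m < 0 -> 0 <= det L m].
Proof.
case: (pselect (exists m, s m < 0)) => [[m0 sm0] | none].
  have [|L sL ext] := @exists_upper_extremal _ _ c (fun m => - s m).
    by exists m0; rewrite oppr_gt0.
  exists L; split=> [|_|m sm]; [lra | lra |].
  by have := ext m; rewrite oppr_gt0 => /(_ sm); lra.
exists i0; rewrite s_i0; split=> // m sm; exfalso; apply: none; by exists m.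
Qed.

Lemma exists_positive_functional :
  exists al be : R, forall m, 0 < al * c m + be * s m.
Proof.
case: (pselect (exists m, s m != 0)) => [[m0 sm0] | all0]; last first.
  exists 1, 0 => m.
  have sm : s m = 0 by apply/eqP; apply: contra_notT all0 => ?; exists m.
  by rewrite (c_eq1 sm); lra.
have [K [sK upK extK]] := upper_pivot; have [L [sL loL extL]] := lower_pivot.
have sLK : s L < s K.
  case: (ltrgtP (s m0) 0) => sm; last by rewrite sm eqxx in sm0.
  - by have := loL (ex_intro _ m0 sm); lra.
  - by have := upK (ex_intro _ m0 sm); lra.
(* [K] and [L] are the extreme vectors of the upper and lower half-planes;
   the functional vanishes on the chord joining them. *)
exists (s K - s L), (c L - c K) => m.
have -> : (s K - s L) * c m + (c L - c K) * s m = det m K + det L m by ring.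
case: (ltrgtP (s m) 0) => sm.
- have := extL m sm; have := det_lt0 sK (ltW sm) (lt_le_trans sm sK).
  lra.
- have := extK m sm; have := det_lt0 (ltW sm) sL (le_lt_trans sL sm).
  lra.
- by rewrite sm (c_eq1 sm); lra.
Qed.

End OpenHalfplane.

Lemma not_open_halfcircle_cases (R : realType) (I : finType) (a : I -> R) (i0 : I) :
  ~ open_halfcircle a ->
  (exists j k l, encloses_origin a j k l) \/ (exists j k, antipodal a j k).
Proof.
move=> not_half.
case: (pselect (exists j k l, encloses_origin a j k l)) => [|no_encl]; first by left.
case: (pselect (exists j k, antipodal a j k)) => [|no_anti]; first by right.
exfalso; apply: not_half.
pose c m := cos (a m - a i0); pose s m := sin (a m - a i0).
have diffE j k : a k - a j = (a k - a i0) - (a j - a i0) by ring.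
have detE j k : c j * s k - s j * c k = sin (a k - a j).
  by rewrite diffE sinB /c /s; ring.
have unit_cs m : c m ^+ 2 + s m ^+ 2 = 1 by exact: cos2Dsin2.
have no_anti' j k : ~ (c k = - c j /\ s k = - s j).
  move=> [ck sk]; apply: no_anti; exists j, k; split.
    by rewrite -detE ck sk; ring.
  by rewrite diffE cosB -/(c k) -/(c j) -/(s k) -/(s j) ck sk -(unit_cs j); ring.
have no_encl' j k l : ~ [/\ 0 < c j * s k - s j * c k,
    0 < c k * s l - s k * c l & 0 < c l * s j - s l * c j].
  by rewrite !detE => encl; apply: no_encl; exists j, k, l.
have c_i0 : c i0 = 1 by rewrite /c subrr cos0.
have s_i0 : s i0 = 0 by rewrite /s subrr sin0.
have [al [be pos]] :=
  exists_positive_functional unit_cs no_anti' no_encl' c_i0 s_i0.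
have al_gt0 : 0 < al by have := pos i0; rewrite /c /s subrr cos0 sin0; lra.
have [rho rho_gt0 [t rot]] :=
  @lin_cos_sin_rotation R al be (sqr_add_gt0 (or_introl (lt0r_neq0 al_gt0))).
exists (t - a i0) => j; have := pos j.
by rewrite /c /s rot pmulr_rgt0 // (_ : a j - a i0 + t = a j + (t - a i0)) //; ring.
Qed.

Section NearAntipodal.
Variables (R : realType) (I : finType).
Implicit Types (a b : I -> R) (j k l : I).

(* Rotating [u_j] clockwise and [u_l] counterclockwise by a small angle
   turns [j, l, k] into a triple enclosing the origin. *)
Lemma balanced_near_antipodal_ccw a j k l e : 0 < e -> l != j -> l != k ->
  antipodal a j k -> 0 <= sin (a l - a j) -> cos (a l - a j) != -1 ->
  exists2 b, (forall m, `|b m - a m| < e) & balanced b.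
Proof.
move=> e_gt0 lj lk [sjk cjk] sl cl.
have kj : k != j by apply: contra_eqN cjk => /eqP ->; rewrite subrr cos0; lra.
have [r r_gt0 sin_gt0] := sin_gt0_right sl cl.
have pi_gt0 := pi_gt0 R.
pose d := Num.min e (Num.min r pi) / 3.
have mpos : 0 < Num.min e (Num.min r pi) by rewrite !lt_min e_gt0 r_gt0 pi_gt0.
have [me mr mpi] : [/\ Num.min e (Num.min r pi) <= e,
    Num.min e (Num.min r pi) <= r & Num.min e (Num.min r pi) <= pi].
  by rewrite !ge_min !lexx !orbT.
have d_gt0 : 0 < d by rewrite /d; lra.
pose b m := if m == j then a j - d else if m == l then a l + d else a m.
have bj : b j = a j - d by rewrite /b eqxx.
have bl : b l = a l + d by rewrite /b (negbTE lj) eqxx.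
have bk : b k = a k by rewrite /b (negbTE kj) eq_sym (negbTE lk).
exists b.
  move=> m; rewrite /b; case: ifP => [/eqP -> | _]; last case: ifP => [/eqP -> | _].
  - have -> : a j - d - a j = - d by ring.
    by rewrite normrN gtr0_norm // /d; lra.
  - have -> : a l + d - a l = d by ring.
    by rewrite gtr0_norm // /d; lra.
  - by rewrite subrr normr0.
apply: (@encloses_origin_balanced _ _ b j l k); split; rewrite ?bj ?bl ?bk.
- rewrite (_ : a l + d - (a j - d) = a l - a j + (d + d)); last by ring.
  by apply: sin_gt0; rewrite /d; apply/andP; split; lra.
- rewrite (_ : a k - (a l + d) = (a k - a j) - (a l - a j + d)); last by ring.
  rewrite sinB sjk cjk mul0r sub0r mulN1r opprK.
  by apply: sin_gt0; rewrite /d; apply/andP; split; lra.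
- rewrite (_ : a j - d - a k = - (a k - a j + d)); last by ring.
  rewrite sinN sinD sjk cjk mul0r add0r mulN1r opprK.
  by apply: sin_gt0_pi; rewrite /d; apply/andP; split; lra.
Qed.

Lemma balanced_near_antipodal a j k l e : 0 < e -> l != j -> l != k ->
  antipodal a j k -> exists2 b, (forall m, `|b m - a m| < e) & balanced b.
Proof.
move=> e_gt0 lj lk anti; have [sjk cjk] := anti.
have [cl | cl] := eqVneq (cos (a l - a j)) (-1).
  (* [u_l = u_k]: use the pair [(k, j)], for which [u_l] sits at angle [0]. *)
  have sl := sin_eq0_cos_eqN1 cl.
  have lkE : a l - a k = (a l - a j) - (a k - a j) by ring.
  apply: (balanced_near_antipodal_ccw e_gt0 lk lj).
  - have kjE : a j - a k = - (a k - a j) by ring.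
    by split; rewrite kjE ?sinN ?cosN ?sjk ?oppr0.
  - by rewrite lkE sinB sl sjk mul0r mulr0 subrr.
  - rewrite lkE cosB cl cjk sl sjk mulr0 addr0 mulN1r opprK.
    by apply/eqP => h; lra.
have [sl | sl] := ltP (sin (a l - a j)) 0.
  2: exact: balanced_near_antipodal_ccw e_gt0 lj lk anti sl cl.
(* [sin (a l - a j) < 0]: reflect all the angles. *)
have opp_diff m m' : - a m' - - a m = - (a m' - a m) by ring.
have anti' : antipodal (fun m => - a m) j k.
  by split; rewrite opp_diff ?sinN ?cosN ?sjk ?oppr0.
have sl' : 0 <= sin (- a l - - a j) by rewrite opp_diff sinN; lra.
have cl' : cos (- a l - - a j) != -1.
  rewrite opp_diff cosN; apply: contraTneq sl => /sin_eq0_cos_eqN1 ->.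
  by rewrite ltxx.
have [b close bal] := balanced_near_antipodal_ccw e_gt0 lj lk anti' sl' cl'.
exists (fun m => - b m); last exact: balanced_opp.
by move=> m; rewrite -opprD normrN -[a m]opprK; exact: close.
Qed.

End NearAntipodal.

Lemma exists_third (I : finType) (j k : I) : (2 < #|I|)%N ->
  exists l, l != j /\ l != k.
Proof.
move=> card3; have : (0 < #|[predC [set j; k]]|)%N.
  have := cardC [set j; k]; rewrite cards2 => card_split.
  rewrite -(ltn_add2l (j != k).+1) addn0 card_split.
  by apply: leq_ltn_trans card3; case: (j != k).
by move=> /card_gt0P[l]; rewrite !inE negb_or => /andP[lj lk]; exists l.
Qed.

Lemma balanced_approx (R : realType) (I : finType) (a : I -> R) :
  (2 < #|I|)%N -> ~ open_halfcircle a ->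
  forall e, 0 < e -> exists2 b, (forall m, `|b m - a m| < e) & balanced b.
Proof.
move=> card3 not_half e e_gt0.
have /card_gt0P[i0 _] : (0 < #|I|)%N by apply: ltn_trans card3.
case: (not_open_halfcircle_cases i0 not_half) => [[j [k [l encl]]] | [j [k anti]]].
  exists a; last exact: encloses_origin_balanced encl.
  by move=> m; rewrite subrr normr0.
have [l [lj lk]] := exists_third j k card3.
exact: balanced_near_antipodal e_gt0 lj lk anti.
Qed.

Section Coamoeba.
Variables (R : realType) (n : nat).
Implicit Types (a b : vec R n).

Lemma torus_equiv_refl a : torus_equiv a a.
Proof. by exists 0, (fun _ => 0) => j; rewrite mulr0 !addr0. Qed.

Lemma torus_equiv_trans a b b' : torus_equiv a b -> torus_equiv b b' ->
  torus_equiv a b'.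
Proof.
move=> [c [k ab]] [c' [k' bb']]; exists (c + c'), (fun j => k j + k' j) => j.
by rewrite bb' ab intrD; ring.
Qed.

Lemma saturated_argP : saturated (@torus_equiv R n) (@argP R n).
Proof.
move=> a b ab [x [y [phi [Sx Sy arg phi_a]]]].
by exists x, y, phi; split=> //; exact: torus_equiv_trans phi_a ab.
Qed.

Lemma is_arg_vec_polar (r a : vec R n) : (forall j, 0 < r j) ->
  is_arg_vec (fun j => r j * cos (a j)) (fun j => r j * sin (a j)) a.
Proof.
move=> r_gt0 j.
have -> : (r j * cos (a j)) ^+ 2 + (r j * sin (a j)) ^+ 2 = r j ^+ 2.
  by rewrite -[RHS]mulr1 -(cos2Dsin2 (a j)); ring.
rewrite sqrtr_sqr gtr0_norm //; split=> //.
have rj := lt0r_neq0 (r_gt0 j).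
have [cj0 | cj] := eqVneq (cos (a j)) 0; last by left; exact: mulf_neq0.
right; apply: mulf_neq0 => //; apply: contra_eqN (cos2Dsin2 (a j)) => /eqP sj0.
by rewrite cj0 sj0 expr0n addr0 eq_sym oner_eq0.
Qed.

Lemma balanced_argP a : balanced a -> argP a.
Proof.
move=> [r r_gt0 [Sc Ss]].
exists (fun j => r j * cos (a j)), (fun j => r j * sin (a j)), a.
by split=> //; [exact: is_arg_vec_polar | exact: torus_equiv_refl].
Qed.

Lemma argP_balanced a : argP a -> balanced a.
Proof.
move=> [x [y [phi [Sx Sy arg [c [k phi_a]]]]]].
pose r j := Num.sqrt (x j ^+ 2 + y j ^+ 2).
exists r => [j|]; first by rewrite sqrtr_gt0 sqr_add_gt0 //; case: (arg j).
have polar j : r j * cos (a j) = x j * cos c - y j * sin c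
    /\ r j * sin (a j) = y j * cos c + x j * sin c.
  have xj : x j = r j * cos (phi j) := (arg j).2.1.
  have yj : y j = r j * sin (phi j) := (arg j).2.2.
  by rewrite phi_a cosD2piz sinD2piz cosD sinD xj yj; split; ring.
split.
  under eq_bigr do rewrite (proj1 (polar _)).
  by rewrite sumrB -!mulr_suml Sx Sy !mul0r subrr.
under eq_bigr do rewrite (proj2 (polar _)).
by rewrite big_split /= -!mulr_suml Sx Sy !mul0r addr0.
Qed.

End Coamoeba.

Section Zonotope.
Variables (R : realType) (n : nat).
Implicit Types (a b : vec R n).

Definition interior_piZonotope b := exists c, forall j, 0 < b j + c < pi.

Lemma open_interior_piZonotope : open_vec (@interior_piZonotope).
Proof.
move=> b [c bc].
pose e := \big[Num.min/1]_j Num.min (b j + c) (pi - (b j + c)).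
exists e => [|b' near_b].
  rewrite /e; apply: lt_bigmin => // j _; have /andP[lo hi] := bc j.
  by rewrite lt_min lo /=; lra.
exists c => j.
have /andP[lo hi] := bc j; have := near_b j; rewrite ltr_norml => /andP[l h].
have : e <= Num.min (b j + c) (pi - (b j + c)) by exact: bigmin_le.
by rewrite le_min => /andP[]; lra.
Qed.

Lemma interior_piZonotope_qinterior b :
  interior_piZonotope b -> qinterior (@mr_equiv R n) (@piZonotope R n) b.
Proof.
move=> bint; have pi_gt0 := pi_gt0 R.
exists (@interior_piZonotope); split=> //.
- exact: open_interior_piZonotope.
- move=> v w [c' vw] [c vc]; exists (c - c') => j.
  by rewrite vw (_ : v j + c' + (c - c') = v j + c) //; ring.
- move=> v [c vc]; exists (fun j => (v j + c) / pi); split.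
    move=> j; have /andP[lo hi] := vc j.
    by rewrite divr_ge0 ?ler_pdivrMr //=; lra.
  by exists (- c) => j; rewrite mulrC divfK ?gt_eqF //; ring.
Qed.

(* An interior point can be pushed by [e] towards the centre of the cube
   while staying in [pi Z_n]; this forces it strictly inside. *)
Lemma qinterior_interior_piZonotope b :
  qinterior (@mr_equiv R n) (@piZonotope R n) b -> interior_piZonotope b.
Proof.
move=> [U [oU _ Ub sub]]; have pi_gt0 := pi_gt0 R.
have [e e_gt0 ball_e] := oU b Ub.
have [t [t01 [c bE]]] := sub b Ub.
set eps := e / pi.
have eps_gt0 : 0 < eps by exact: divr_gt0.
have epsE : eps * pi = e by rewrite /eps divfK ?gt_eqF.
pose p j := b j + eps * (pi * t j - pi / 2).
have Up : U p.
  apply: ball_e => j; rewrite /p addrC addKr normrM gtr0_norm // -epsE.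
  rewrite ltr_pM2l // ltr_norml; have /andP[t0 t1] := t01 j.
  by apply/andP; split; nra.
have [t' [t'01 [g pE]]] := sub p Up.
exists (- (g - c) / (1 + eps) - c) => j.
have key : (b j + (- (g - c) / (1 + eps) - c)) * (1 + eps)
    = pi * t' j + eps * pi / 2.
  have pj := pE j; rewrite /p bE in pj.
  have -> : pi * t' j = pi * t j + c + eps * (pi * t j - pi / 2) - g.
    by rewrite pj; ring.
  by rewrite bE; field; rewrite gt_eqF //; lra.
have /andP[t'0 t'1] := t'01 j.
by set X := b j + _ in key *; apply/andP; split; nra.
Qed.

Lemma qinterior_piZonotopeP b :
  qinterior (@mr_equiv R n) (@piZonotope R n) b <-> interior_piZonotope b.
Proof.
split; first exact: qinterior_interior_piZonotope.
exact: interior_piZonotope_qinterior.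
Qed.

Lemma zonotope_imageP a : zonotope_image a <-> open_halfcircle a.
Proof.
split.
  move=> [b [/qinterior_piZonotopeP[c bc] [c' [k ba]]]].
  exists (c - c') => j.
  rewrite ba (_ : _ + (c - c') = b j + c + 2 * pi * (k j)%:~R).
    by rewrite sinD2piz; apply: sin_gt0_pi.
  by ring.
move=> [d sd]; have [k kP] := choice (fun j => sin_gt0_shift_pi (sd j)).
exists (fun j => a j + d + 2 * pi * (k j)%:~R); split.
  by apply/qinterior_piZonotopeP; exists 0 => j; rewrite addr0.
by exists (- d), (fun j => - k j) => j; rewrite mulrNz; ring.
Qed.

Lemma open_zonotope_image : open_vec (@zonotope_image R n).
Proof.
move=> a [b [[U [oU sU Ub sub]] [c [k ba]]]].
have [e e_gt0 ball_e] := oU b Ub.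
exists e => // a' near_a.
exists (fun j => a' j - c - 2 * pi * (k j)%:~R); split.
  exists U; split=> //; apply: ball_e => j.
  by rewrite (_ : _ - b j = a' j - a j) ?near_a // ba; ring.
by exists c, k => j; ring.
Qed.

Lemma saturated_zonotope_image : saturated (@torus_equiv R n) (@zonotope_image R n).
Proof.
move=> a a' aa' [b [bint ba]]; exists b; split=> //.
exact: torus_equiv_trans ba aa'.
Qed.

End Zonotope.

Theorem proposition2p4 (R : realType) (n : nat) (hn : (1 <= n)%N) :
  forall a : vec R n, coamoeba a <-> ~ zonotope_image a.
Proof.
move=> a; split.
- move=> a_coam a_zon.
  have [b [b' [b_zon [b'_arg b'b]]]] :=
    a_coam _ (@open_zonotope_image R n) (@saturated_zonotope_image R n) a_zon.
  have b_bal := argP_balanced (saturated_argP b'b b'_arg).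
  exact: balanced_not_open_halfcircle ord0 b_bal (iffLR (zonotope_imageP b) b_zon).
- move=> not_zon U oU _ Ua.
  have [e e_gt0 ball_e] := oU a Ua.
  have card3 : (2 < #|'I_n.+2|)%N by rewrite card_ord ltnS ltnS.
  have not_half : ~ open_halfcircle a by move=> /zonotope_imageP.
  have [b near_a b_bal] := balanced_approx card3 not_half e_gt0.
  exists b, b; split; first exact: ball_e.
  by split; [exact: balanced_argP | exact: torus_equiv_refl].
Qed.
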